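(* Let $\mu\in\mathbb{C}$ and $\ell\in\mathbb{N}_0$. For every $f\in C^\infty(\mathbb{R}_+)$ and $x>0$, $$\mathcal{D}_{\mu,2\ell+1}\big(x^{-(2\ell+1)}e^{-x}f(2x)\big)=x^{-(2\ell+1)}e^{-x}\left(\Big(4\mathcal{P}_{\mu,\ell}+\frac{(\mu-2\ell-1)(\mu+2\ell+3)}{2}\Big)f\right)(2x).$$
   Context: Let $\theta=x\frac{d}{dx}$ be the Euler operator on $\mathbb{R}_+$; products of operators denote composition and functions of $x$ act by multiplication. Define $$\mathcal{D}_{\mu,\nu}=\frac{1}{x^2}\big((\theta+\nu)(\theta+\mu+\nu)-x^2\big)\big(\theta(\theta+\mu)-x^2\big)-\frac{(\mu-\nu)(\mu+\nu+2)}{2}$$ and $$\mathcal{P}_{\mu,\ell}=\frac{1}{x^2}\Big(\big(\theta+\mu-2\ell-1-\tfrac x2\big)\big(\theta+\mu-\tfrac x2\big)-\big(\tfrac x2\big)^2\Big)\Big(\big(\theta-2\ell-1-\tfrac x2\big)\big(\theta-\tfrac x2\big)-\big(\tfrac x2\big)^2\Big).$$ *)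

From Stdlib Require Import Reals.
From Coquelicot Require Import Coquelicot.
Open Scope R_scope.

(* Complex-valued functions of a real variable; only their values on (0,+oo) matter. *)
Definition cfun := R -> C.
Definition Op := cfun -> cfun.

Definition Dc (f : cfun) : cfun :=
  fun x => (Derive (fun t => Re (f t)) x, Derive (fun t => Im (f t)) x).

Definition smooth_pos (f : cfun) : Prop :=
  forall (n : nat) (x : R), 0 < x ->
    ex_derive (Derive_n (fun t => Re (f t)) n) x /\
    ex_derive (Derive_n (fun t => Im (f t)) n) x.

Definition theta : Op := fun f x => (RtoC x * Dc f x)%C.
Definition op_comp (A B : Op) : Op := fun f => A (B f).
Definition op_add (A B : Op) : Op := fun f x => (A f x + B f x)%C.
Definition op_sub (A B : Op) : Op := fun f x => (A f x - B f x)%C.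
Definition op_cst (c : C) : Op := fun f x => (c * f x)%C.
Definition op_mulf (g : R -> C) : Op := fun f x => (g x * f x)%C.

Definition Dop (mu nu : C) : Op :=
  op_sub
    (op_comp (op_mulf (fun x => RtoC (/ (x ^ 2))))
       (op_comp
          (op_sub (op_comp (op_add theta (op_cst nu)) (op_add theta (op_cst (mu + nu)%C)))
                  (op_mulf (fun x => RtoC (x ^ 2))))
          (op_sub (op_comp theta (op_add theta (op_cst mu)))
                  (op_mulf (fun x => RtoC (x ^ 2))))))
    (op_cst ((mu - nu) * (mu + nu + RtoC 2) / RtoC 2)%C).

Definition Pop (mu : C) (l : nat) : Op :=
  let a := RtoC (2 * INR l + 1) in
  let half := op_mulf (fun x => RtoC (x / 2)) in
  let sq := op_mulf (fun x => RtoC ((x / 2) ^ 2)) in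
  op_comp (op_mulf (fun x => RtoC (/ (x ^ 2))))
    (op_comp
       (op_sub (op_comp (op_sub (op_add theta (op_cst (mu - a)%C)) half)
                        (op_sub (op_add theta (op_cst mu)) half))
               sq)
       (op_sub (op_comp (op_sub (op_add theta (op_cst (- a)%C)) half)
                        (op_sub theta half))
               sq)).

(** The weight [q t = t^-n e^-t], [n = 2l+1], has logarithmic derivative
    [-n/t - 1], and each derivative of [t ↦ f (2t)] only contributes a factor
    [2].  So the product and chain rules express every iterated [θ] on either
    side in closed form, as [q x] times a combination of [f^(j) (2x)], [j ≤ 4],
    with coefficients rational in [x], [μ] and [l]; the theorem is then an
    identity of rational functions. *)

From Stdlib Require Import Reals Lra.
From Coquelicot Require Import Coquelicot.
Open Scope R_scope.

Definition is_deriveC_pos (h dh : cfun) : Prop :=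
  forall t, 0 < t ->
    is_derive (fun s => Re (h s)) t (Re (dh t)) /\
    is_derive (fun s => Im (h s)) t (Im (dh t)).

Lemma is_deriveC_pos_ext (h k dh : cfun) :
  (forall t, 0 < t -> h t = k t) -> is_deriveC_pos k dh -> is_deriveC_pos h dh.
Proof.
  intros Ehk Hk t Ht.
  assert (Hnear : locally t (fun s => 0 < s)).
  { apply (locally_interval _ t 0 p_infty); simpl; auto. }
  destruct (Hk t Ht) as [HRe HIm]; split.
  - apply (is_derive_ext_loc (fun s => Re (k s))); [|exact HRe].
    apply (filter_imp _ _ (fun s Hs => f_equal Re (eq_sym (Ehk s Hs))) Hnear).
  - apply (is_derive_ext_loc (fun s => Im (k s))); [|exact HIm].
    apply (filter_imp _ _ (fun s Hs => f_equal Im (eq_sym (Ehk s Hs))) Hnear).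
Qed.

Lemma is_deriveC_pos_ext_derive (h dh dk : cfun) :
  is_deriveC_pos h dh -> (forall t, 0 < t -> dh t = dk t) -> is_deriveC_pos h dk.
Proof. intros Hh E t Ht; rewrite <- E by exact Ht; exact (Hh t Ht). Qed.

Lemma is_deriveC_pos_const (c : C) : is_deriveC_pos (fun _ => c) (fun _ => RtoC 0).
Proof.
  intros t _; split; [exact (is_derive_const (Re c) t) | exact (is_derive_const (Im c) t)].
Qed.

Lemma is_deriveC_pos_RtoC (r dr : R -> R) :
  (forall t, 0 < t -> is_derive r t (dr t)) ->
  is_deriveC_pos (fun t => RtoC (r t)) (fun t => RtoC (dr t)).
Proof. intros Hr t Ht; split; [exact (Hr t Ht) | exact (is_derive_const 0 t)]. Qed.

Lemma is_deriveC_pos_plus (h k dh dk : cfun) :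
  is_deriveC_pos h dh -> is_deriveC_pos k dk ->
  is_deriveC_pos (fun t => h t + k t)%C (fun t => dh t + dk t)%C.
Proof.
  intros Hh Hk t Ht; destruct (Hh t Ht) as [HhRe HhIm], (Hk t Ht) as [HkRe HkIm].
  split; [exact (is_derive_plus _ _ _ _ _ HhRe HkRe)
        | exact (is_derive_plus _ _ _ _ _ HhIm HkIm)].
Qed.

Lemma is_deriveC_pos_minus (h k dh dk : cfun) :
  is_deriveC_pos h dh -> is_deriveC_pos k dk ->
  is_deriveC_pos (fun t => h t - k t)%C (fun t => dh t - dk t)%C.
Proof.
  intros Hh Hk t Ht; destruct (Hh t Ht) as [HhRe HhIm], (Hk t Ht) as [HkRe HkIm].
  split; [exact (is_derive_minus _ _ _ _ _ HhRe HkRe)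
        | exact (is_derive_minus _ _ _ _ _ HhIm HkIm)].
Qed.

Lemma is_derive_Rmult (r s : R -> R) (x dr ds : R) :
  is_derive r x dr -> is_derive s x ds ->
  is_derive (fun t => r t * s t) x (dr * s x + r x * ds).
Proof. intros Hr Hs; apply (is_derive_mult r s x dr ds Hr Hs), Rmult_comm. Qed.

Lemma is_deriveC_pos_mult (h k dh dk : cfun) :
  is_deriveC_pos h dh -> is_deriveC_pos k dk ->
  is_deriveC_pos (fun t => h t * k t)%C (fun t => dh t * k t + h t * dk t)%C.
Proof.
  intros Hh Hk t Ht; destruct (Hh t Ht) as [HhRe HhIm], (Hk t Ht) as [HkRe HkIm].
  split.
  - replace (Re (dh t * k t + h t * dk t)%C) with
      (Re (dh t) * Re (k t) + Re (h t) * Re (dk t)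
       - (Im (dh t) * Im (k t) + Im (h t) * Im (dk t))) by (unfold Re, Im; simpl; ring).
    exact (is_derive_minus _ _ _ _ _
             (is_derive_Rmult _ _ _ _ _ HhRe HkRe) (is_derive_Rmult _ _ _ _ _ HhIm HkIm)).
  - replace (Im (dh t * k t + h t * dk t)%C) with
      (Re (dh t) * Im (k t) + Re (h t) * Im (dk t)
       + (Im (dh t) * Re (k t) + Im (h t) * Re (dk t))) by (unfold Re, Im; simpl; ring).
    exact (is_derive_plus _ _ _ _ _
             (is_derive_Rmult _ _ _ _ _ HhRe HkIm) (is_derive_Rmult _ _ _ _ _ HhIm HkRe)).
Qed.

Lemma is_deriveC_pos_dilate (h dh : cfun) (c : R) :
  0 < c -> is_deriveC_pos h dh ->
  is_deriveC_pos (fun t => h (c * t)) (fun t => RtoC c * dh (c * t)%R)%C.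
Proof.
  intros Hc Hh t Ht.
  assert (Hct : 0 < c * t) by nra.
  assert (Hlin : is_derive (fun s => c * s) t c) by (auto_derive; auto; ring).
  destruct (Hh _ Hct) as [HRe HIm]; split.
  - replace (Re (RtoC c * dh (c * t)%R)%C) with (scal c (Re (dh (c * t))))
      by (unfold scal, Re, Im; simpl; unfold mult; simpl; ring).
    exact (is_derive_comp (fun s => Re (h s)) (fun s => c * s) t _ _ HRe Hlin).
  - replace (Im (RtoC c * dh (c * t)%R)%C) with (scal c (Im (dh (c * t))))
      by (unfold scal, Re, Im; simpl; unfold mult; simpl; ring).
    exact (is_derive_comp (fun s => Im (h s)) (fun s => c * s) t _ _ HIm Hlin).
Qed.

Lemma Dc_is_deriveC_pos (h dh : cfun) (t : R) :
  is_deriveC_pos h dh -> 0 < t -> Dc h t = dh t.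
Proof.
  intros Hh Ht; destruct (Hh t Ht) as [HRe HIm]; unfold Dc.
  replace (Derive (fun s => Re (h s)) t) with (Re (dh t))
    by (symmetry; exact (is_derive_unique _ _ _ HRe)).
  replace (Derive (fun s => Im (h s)) t) with (Im (dh t))
    by (symmetry; exact (is_derive_unique _ _ _ HIm)).
  destruct (dh t); reflexivity.
Qed.

Lemma theta_is_deriveC_pos (h dh : cfun) (t : R) :
  is_deriveC_pos h dh -> 0 < t -> theta h t = (RtoC t * dh t)%C.
Proof.
  intros Hh Ht; unfold theta; rewrite (Dc_is_deriveC_pos h dh t Hh Ht); reflexivity.
Qed.

Lemma is_deriveC_pos_theta (h dh dth : cfun) :
  is_deriveC_pos h dh -> is_deriveC_pos (fun t => RtoC t * dh t)%C dth ->
  is_deriveC_pos (theta h) dth.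
Proof.
  intros Hh; apply is_deriveC_pos_ext; intros t Ht.
  exact (theta_is_deriveC_pos h dh t Hh Ht).
Qed.

Definition DnC (f : cfun) (j : nat) (t : R) : C :=
  (Derive_n (fun s => Re (f s)) j t, Derive_n (fun s => Im (f s)) j t).

Lemma DnC_O (f : cfun) (t : R) : DnC f 0 t = f t.
Proof. unfold DnC; simpl; destruct (f t); reflexivity. Qed.

Lemma is_deriveC_pos_DnC (f : cfun) (j : nat) :
  smooth_pos f -> is_deriveC_pos (DnC f j) (DnC f (S j)).
Proof.
  intros Hf t Ht; destruct (Hf j t Ht) as [HRe HIm]; simpl.
  split; apply Derive_correct; assumption.
Qed.

Lemma is_deriveC_pos_smooth (f : cfun) : smooth_pos f -> is_deriveC_pos f (DnC f 1).
Proof.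
  intros Hf; apply (is_deriveC_pos_ext _ (DnC f 0)).
  - intros t _; symmetry; apply DnC_O.
  - apply is_deriveC_pos_DnC, Hf.
Qed.

Lemma is_derive_inv_pow_exp (n : nat) (t : R) :
  0 < t ->
  is_derive (fun s => / s ^ n * exp (- s)) t ((- INR n / t - 1) * (/ t ^ n * exp (- t))).
Proof.
  intros Ht.
  assert (Ht0 : t <> 0) by lra.
  assert (Htn : t ^ n <> 0) by (apply pow_nonzero; lra).
  auto_derive; [exact Htn|].
  destruct n as [|n]; [simpl; field; exact Ht0|].
  simpl Nat.pred; rewrite <- tech_pow_Rmult in Htn |- *.
  field; split; [apply pow_nonzero|]; lra.
Qed.

Lemma is_deriveC_pos_inv_pow_exp (n : nat) :
  is_deriveC_pos (fun t => RtoC (/ t ^ n * exp (- t)))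
    (fun t => (RtoC (- INR n) * RtoC (/ t) - RtoC 1) * RtoC (/ t ^ n * exp (- t)))%C.
Proof.
  eapply is_deriveC_pos_ext_derive.
  - apply is_deriveC_pos_RtoC; intros t Ht; exact (is_derive_inv_pow_exp n t Ht).
  - intros t _; rewrite <- RtoC_mult, <- RtoC_minus, <- RtoC_mult; reflexivity.
Qed.

Ltac derive_pos f Hf :=
  cbv beta;
  lazymatch goal with
  | |- is_deriveC_pos (fun _ => ?c) _ => apply is_deriveC_pos_const
  | |- is_deriveC_pos (fun t => theta ?h t) _ =>
      eapply (is_deriveC_pos_theta h); [derive_pos f Hf | derive_pos f Hf]
  | |- is_deriveC_pos (theta _) _ =>
      eapply is_deriveC_pos_theta; [derive_pos f Hf | derive_pos f Hf]
  | |- is_deriveC_pos (fun t => (_ + _)%C) _ =>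
      eapply is_deriveC_pos_plus; [derive_pos f Hf | derive_pos f Hf]
  | |- is_deriveC_pos (fun t => (_ - _)%C) _ =>
      eapply is_deriveC_pos_minus; [derive_pos f Hf | derive_pos f Hf]
  | |- is_deriveC_pos (fun t => (_ * _)%C) _ =>
      eapply is_deriveC_pos_mult; [derive_pos f Hf | derive_pos f Hf]
  | |- is_deriveC_pos (fun t => RtoC (/ t ^ _ * exp (- t))) _ =>
      apply is_deriveC_pos_inv_pow_exp
  | |- is_deriveC_pos (fun t => RtoC _) _ =>
      apply is_deriveC_pos_RtoC; intros ? ?;
      auto_derive;
      [repeat split; auto; repeat apply Rmult_integral_contrapositive_currified; lra
      | reflexivity]
  | |- is_deriveC_pos RtoC _ =>
      apply (is_deriveC_pos_RtoC (fun t => t)); intros ? ?;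
      auto_derive; [auto | reflexivity]
  | |- is_deriveC_pos (fun t => f (2 * t)) _ =>
      apply (is_deriveC_pos_dilate f); [lra | apply is_deriveC_pos_smooth, Hf]
  | |- is_deriveC_pos (fun t => DnC f _ (2 * t)) _ =>
      apply (is_deriveC_pos_dilate (DnC f _)); [lra | apply is_deriveC_pos_DnC, Hf]
  | |- is_deriveC_pos (DnC f _) _ => apply is_deriveC_pos_DnC, Hf
  | |- is_deriveC_pos f _ => apply is_deriveC_pos_smooth, Hf
  end.

Theorem lemma3p3 (mu : C) (l : nat) (f : R -> C) (x : R) :
  smooth_pos f -> 0 < x ->
  Dop mu (RtoC (2 * INR l + 1))
      (fun t => (RtoC (/ (t ^ (2 * l + 1)) * exp (- t)) * f (2 * t)%R)%C) x
  = (RtoC (/ (x ^ (2 * l + 1)) * exp (- x)) *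
     op_add (op_comp (op_cst (RtoC 4)) (Pop mu l))
            (op_cst ((mu - RtoC (2 * INR l + 1)) * (mu + RtoC (2 * INR l + 3)) / RtoC 2)%C)
            f (2 * x)%R)%C.
Proof.
  intros Hf Hx.
  assert (H2x : 0 < 2 * x) by lra.
  unfold Dop, Pop, op_sub, op_comp, op_add, op_cst, op_mulf; cbv beta.
  repeat (erewrite (theta_is_deriveC_pos _ _ x); [| derive_pos f Hf | exact Hx]).
  repeat (erewrite (theta_is_deriveC_pos _ _ (2 * x)); [| derive_pos f Hf | exact H2x]).
  (* [f (2x)] must be the same atom as the derivatives [DnC f j (2x)]. *)
  cbv beta; rewrite <- (DnC_O f (2 * x)).
  set (q := / x ^ (2 * l + 1) * exp (- x)); clearbody q.
  replace (INR (2 * l + 1)) with (2 * INR l + 1) by (rewrite plus_INR, mult_INR; simpl; ring).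
  unfold Rdiv.
  repeat first [ rewrite RtoC_plus | rewrite RtoC_mult | rewrite RtoC_minus
               | rewrite RtoC_opp | rewrite RtoC_pow
               | rewrite RtoC_inv
                   by (repeat apply Rmult_integral_contrapositive_currified;
                       try apply pow_nonzero; lra) ].
  field; intros H0; apply (f_equal fst) in H0; simpl in H0; lra.
Qed.
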